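(* Let $T$ be a finite rooted tree with root $\rho$, arc set $A_T$ (arcs directed away from the root) and leaf set $X$, with a non-negative length $\lambda_a$ on each arc $a\in A_T$. Consider a trait-dependent field of bullets (t-FOB) model on $T$, defined as follows. For $j=1,\dots,k$, $\xi_j$ is a two-state Markov process on $T$ with state space $\{0,1\}$, strictly positive root probabilities $\pi^{(j)}_0,\pi^{(j)}_1$, and transition matrices $P^{(j)}(r,s)$ with $\det P^{(j)}(r,s)\ge 0$ for all arcs $(r,s)$; these $k$ processes are independent, and $\boldsymbol{\xi}=(\xi_1,\dots,\xi_k)$ assigns a state $\boldsymbol{\xi}(x)\in\{0,1\}^k$ to each leaf $x$. For each species $x\in X$ and each $\mathbf{i}\in\{0,1\}^k$ a number $p_x^{\mathbf{i}}\in[0,1]$ is given, such that $p_x^{\mathbf{i}}\le p_x^{\mathbf{l}}$ whenever $l_j\le i_j$ for all $j=1,\dots,k$. Conditional on the leaf states, the species go extinct independently, species $x$ in state $\mathbf{i}$ going extinct with probability $p_x^{\mathbf{i}}$. The associated generalized field of bullets (g-FOB) model is the model in which each species $x\in X$ goes extinct independently of the others with probability $p_x=\sum_{\mathbf{i}\in\{0,1\}^k}p_x^{\mathbf{i}}\,\mathbb{P}(\boldsymbol{\xi}(x)=\mathbf{i})$ (the same marginal extinction probability as under the t-FOB model). Then the expected future phylogenetic diversity under the t-FOB model is less than or equal to the expected future phylogenetic diversity under the associated g-FOB model.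
   Context: For $Y\subseteq X$, the phylogenetic diversity $\varphi_Y$ is the sum of the lengths of the arcs of the minimal subtree of $T$ connecting the root and the leaves in $Y$. Under an extinction model, the future phylogenetic diversity is the random variable $\varphi=\varphi_S$, where $S$ is the (random) set of species in $X$ that are not extinct. Equivalently, $\mathbb{E}[\varphi]=\sum_{a=(u,v)\in A_T}\lambda_a\bigl(1-\mathbb{P}(\text{all leaves in }C_v\text{ are extinct})\bigr)$, where $C_v$ is the set of leaves separated from the root by $v$ ($C_v=\{v\}$ if $v$ is a leaf). Markov processes on trees: $\xi(\rho)=i$ with probability $\pi_i$, and the $(i,l)$ entry of $P(r,s)$ is the conditional probability that $\xi(s)=l$ given $\xi(r)=i$, with the Markov property along the tree. *)

From HB Require Import structures.
From mathcomp Require Import all_boot all_order all_algebra.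
Set Implicit Arguments. Unset Strict Implicit. Unset Printing Implicit Defensive.
Import Order.TTheory GRing.Theory Num.Theory.
Local Open Scope ring_scope.

(* A finite rooted tree on the vertex type V is given by a root and a parent
   map; arcs are (parent v, v) for v != root, directed away from the root. *)
Definition is_rooted_tree (V : finType) (root : V) (parent : V -> V) : Prop :=
  parent root = root /\ forall v : V, exists n : nat, iter n parent v = root.

(* u is an ancestor of v or u = v (u lies on the path from the root to v). *)
Definition anc (V : finType) (parent : V -> V) (u v : V) : bool :=
  [exists n : 'I_#|V|, iter n parent v == u].

Definition is_leaf (V : finType) (root : V) (parent : V -> V) (x : V) : bool :=
  [forall v : V, (v != root) ==> (parent v != x)].

Definition leaves (V : finType) (root : V) (parent : V -> V) : {set V} :=
  [set x | is_leaf root parent x].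

(* phylogenetic diversity phi_Y: sum of lengths of arcs (parent v, v) of the
   minimal subtree connecting the root and the leaves in Y, i.e. the arcs
   whose head v is an ancestor-or-equal of some leaf of Y. *)
Definition PD (R : numDomainType) (V : finType) (root : V) (parent : V -> V)
  (lambda : V -> R) (Y : {set V}) : R :=
  \sum_(v : V | v != root) (if [exists x in Y, anc parent v x] then lambda v else 0).

(* Joint law of k independent two-state Markov processes on the tree:
   a configuration xi assigns to each process j and vertex v a state in 'I_2. *)
Definition config_prob (R : numDomainType) (V : finType) (root : V)
  (parent : V -> V) (k : nat) (pi : 'I_k -> 'I_2 -> R)
  (P : 'I_k -> V -> 'M[R]_2) (xi : {ffun 'I_k -> {ffun V -> 'I_2}}) : R :=
  \prod_(j < k) (pi j (xi j root) *
     \prod_(v : V | v != root) P j v (xi j (parent v)) (xi j v)).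

Definition state_at (V : finType) (k : nat)
  (xi : {ffun 'I_k -> {ffun V -> 'I_2}}) (x : V) : {ffun 'I_k -> 'I_2} :=
  [ffun j => xi j x].

(* probability that exactly the leaves in S survive, given extinction
   probabilities q x for the leaves x (independent extinctions) *)
Definition surv_prob (R : numDomainType) (V : finType) (X : {set V})
  (q : V -> R) (S : {set V}) : R :=
  \prod_(x in X) (if x \in S then 1 - q x else q x).

Definition expPD_tFOB (R : numDomainType) (V : finType) (root : V)
  (parent : V -> V) (lambda : V -> R) (k : nat) (pi : 'I_k -> 'I_2 -> R)
  (P : 'I_k -> V -> 'M[R]_2) (p : V -> {ffun 'I_k -> 'I_2} -> R) : R :=
  \sum_(xi : {ffun 'I_k -> {ffun V -> 'I_2}})
    config_prob root parent pi P xi *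
    \sum_(S : {set V} | S \subset leaves root parent)
      surv_prob (leaves root parent) (fun x => p x (state_at xi x)) S
      * PD root parent lambda S.

Definition leaf_state_prob (R : numDomainType) (V : finType) (root : V)
  (parent : V -> V) (k : nat) (pi : 'I_k -> 'I_2 -> R)
  (P : 'I_k -> V -> 'M[R]_2) (x : V) (i : {ffun 'I_k -> 'I_2}) : R :=
  \sum_(xi : {ffun 'I_k -> {ffun V -> 'I_2}} | state_at xi x == i)
    config_prob root parent pi P xi.

Definition gFOB_prob (R : numDomainType) (V : finType) (root : V)
  (parent : V -> V) (k : nat) (pi : 'I_k -> 'I_2 -> R)
  (P : 'I_k -> V -> 'M[R]_2) (p : V -> {ffun 'I_k -> 'I_2} -> R) (x : V) : R :=
  \sum_(i : {ffun 'I_k -> 'I_2}) p x i * leaf_state_prob root parent pi P x i.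

Definition expPD_gFOB (R : numDomainType) (V : finType) (root : V)
  (parent : V -> V) (lambda : V -> R) (k : nat) (pi : 'I_k -> 'I_2 -> R)
  (P : 'I_k -> V -> 'M[R]_2) (p : V -> {ffun 'I_k -> 'I_2} -> R) : R :=
  \sum_(S : {set V} | S \subset leaves root parent)
    surv_prob (leaves root parent) (gFOB_prob root parent pi P p) S
    * PD root parent lambda S.

(* Expected future PD is the sum over arcs (u, v) of lambda_v times the
   probability that some leaf below v survives, i.e. one minus the probability
   that all of them go extinct.  Under the g-FOB model that probability is
   prod_x E[p_x(xi(x))]; under the t-FOB model it is E[prod_x p_x(xi(x))].
   Each p_x(xi(x)) is a nonnegative nonincreasing function of the configuration
   xi, and the law of xi is log-supermodular: the root laws trivially, each
   transition matrix because det P >= 0 makes it TP2, and independent products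
   preserve this.  The Harris-FKG inequality, derived from the Ahlswede-Daykin
   four functions theorem, then gives E[prod_x f_x] >= prod_x E[f_x], so
   extinction of all leaves below an arc is likelier under the t-FOB model. *)

From HB Require Import structures.
From mathcomp Require Import all_boot all_order all_algebra.
From mathcomp Require Import ring.
Set Implicit Arguments. Unset Strict Implicit. Unset Printing Implicit Defensive.
Import Order.TTheory GRing.Theory Num.Theory.
Local Open Scope ring_scope.

Section FourFunctions.
Variable R : numDomainType.

Lemma sum_subsets_setD1 (T : finType) (D : {set T}) (i : T) (F : {set T} -> R) :
  i \in D ->
  \sum_(A : {set T} | A \subset D) F A =
  \sum_(A : {set T} | A \subset D :\ i) (F A + F (i |: A)).
Proof.
move=> iD; rewrite big_split /= (bigID (fun A : {set T} => i \in A)) /= addrC.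
congr (_ + _); first by apply: eq_bigl => A; rewrite subsetD1.
rewrite (reindex_onto (fun A => i |: A) (fun A => A :\ i)) /=; last first.
  by move=> A /andP [_ iA]; rewrite setD1K.
apply: eq_bigl => A; rewrite subsetD1 subUset sub1set iD setU11 /= andbT.
case iA: (i \in A); last by rewrite setU1K ?iA ?eqxx ?andbT.
rewrite andbF; apply: negbTE; apply/negP => /andP [_ /eqP eA].
by move: iA; rewrite -eA setD11.
Qed.

Lemma four_functions_base (a0 a1 b0 b1 c0 c1 d0 d1 : R) :
  0 <= a0 -> 0 <= a1 -> 0 <= b0 -> 0 <= b1 ->
  0 <= c0 -> 0 <= c1 -> 0 <= d0 -> 0 <= d1 ->
  a0 * b0 <= c0 * d0 -> a0 * b1 <= c1 * d0 -> a1 * b0 <= c1 * d0 ->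
  a1 * b1 <= c1 * d1 ->
  (a0 + a1) * (b0 + b1) <= (c0 + c1) * (d0 + d1).
Proof.
move=> ha0 ha1 hb0 hb1 hc0 hc1 hd0 hd1 h00 h01 h10 h11.
set x := a0 * b1; set y := a1 * b0; set u := c1 * d0; set w := c0 * d1.
have hx : 0 <= x by rewrite mulr_ge0.
have hy : 0 <= y by rewrite mulr_ge0.
have hw : 0 <= w by rewrite mulr_ge0.
have hxy : x * y <= u * w.
  have -> : x * y = (a0 * b0) * (a1 * b1) by rewrite /x /y; ring.
  have -> : u * w = (c0 * d0) * (c1 * d1) by rewrite /u /w; ring.
  by apply: ler_pM; rewrite ?mulr_ge0.
(* x, y <= u and x y <= u w force x + y <= u + w, as (u - x)(u - y) >= 0. *)
have cross : x + y <= u + w.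
  have [u0|u_neq0] := eqVneq u 0.
    have -> : x = 0 by apply/le_anti; rewrite hx andbT -u0.
    have -> : y = 0 by apply/le_anti; rewrite hy andbT -u0.
    by rewrite u0 !add0r.
  have u_gt0 : 0 < u by rewrite lt_def u_neq0 mulr_ge0.
  rewrite -(ler_pM2l u_gt0).
  have : 0 <= (u - x) * (u - y) by apply: mulr_ge0; rewrite subr_ge0.
  have -> : (u - x) * (u - y) = u * u + x * y - u * (x + y) by ring.
  rewrite subr_ge0 => h; apply: (le_trans h); rewrite mulrDr lerD2l.
  exact: hxy.
have -> : (a0 + a1) * (b0 + b1) = a0 * b0 + a1 * b1 + (x + y) by rewrite /x /y; ring.
have -> : (c0 + c1) * (d0 + d1) = c0 * d0 + c1 * d1 + (u + w) by rewrite /u /w; ring.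
by apply: lerD => //; apply: lerD.
Qed.

Lemma setIU1_notin (T : finType) (A B : {set T}) (i : T) :
  i \notin A -> A :&: (i |: B) = A :&: B.
Proof.
move=> iA; apply/setP => x; rewrite !inE.
by case: (eqVneq x i) => [->|] //=; rewrite (negbTE iA).
Qed.

Lemma ahlswede_daykin (T : finType) (D : {set T}) (a b c d : {set T} -> R) :
  (forall A, 0 <= a A) -> (forall A, 0 <= b A) ->
  (forall A, 0 <= c A) -> (forall A, 0 <= d A) ->
  (forall A B : {set T}, A \subset D -> B \subset D ->
     a A * b B <= c (A :|: B) * d (A :&: B)) ->
  (\sum_(A : {set T} | A \subset D) a A) * (\sum_(A : {set T} | A \subset D) b A)
  <= (\sum_(A : {set T} | A \subset D) c A) * (\sum_(A : {set T} | A \subset D) d A).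
Proof.
move: {2}#|D| (erefl #|D|) => n; elim: n D a b c d
  => [|n IH] D a b c d cD ha hb hc hd H.
  move/eqP: cD; rewrite cards_eq0 => /eqP D0; subst D.
  have sub0E : (fun A : {set T} => A \subset set0) =1 pred1 set0.
    by move=> A; rewrite subset0.
  rewrite !(big_pred1 _ sub0E).
  by have := H set0 set0 (sub0set _) (sub0set _); rewrite setU0 set0I.
have /set0Pn [i iD] : D != set0 by rewrite -card_gt0 cD.
rewrite !(sum_subsets_setD1 _ iD).
have cDi : #|D :\ i| = n by move: cD; rewrite (cardsD1 i D) iD add1n => -[].
apply: IH cDi _ _ _ _ _ => [A|A|A|A|A B]; rewrite ?addr_ge0 //.
rewrite !subsetD1 => /andP [AD iA] /andP [BD iB].
have iAD : i |: A \subset D by rewrite subUset sub1set iD.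
have iBD : i |: B \subset D by rewrite subUset sub1set iD.
apply: four_functions_base => //.
- exact: H.
- by have := H _ _ AD iBD; rewrite setIU1_notin // setUCA.
- by have := H _ _ iAD BD; rewrite setIC setIU1_notin // setIC setUA.
- by have := H _ _ iAD iBD; rewrite -setUIr setUACA setUid.
Qed.

End FourFunctions.

Definition log_supermodular (R : numDomainType) (T : finType) (mu : {set T} -> R) :=
  forall A B : {set T}, mu A * mu B <= mu (A :|: B) * mu (A :&: B).

Lemma harris_sets (R : numDomainType) (T : finType) (mu f g : {set T} -> R) :
  (forall A, 0 <= mu A) -> (forall A, 0 <= f A) -> (forall A, 0 <= g A) ->
  (forall A B : {set T}, A \subset B -> f B <= f A) ->
  (forall A B : {set T}, A \subset B -> g B <= g A) ->
  log_supermodular mu ->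
  (\sum_A mu A * f A) * (\sum_A mu A * g A)
  <= (\sum_A mu A) * (\sum_A mu A * f A * g A).
Proof.
move=> mu_ge0 f_ge0 g_ge0 f_dec g_dec mu_lsm.
have sumT (F : {set T} -> R) : \sum_A F A = \sum_(A : {set T} | A \subset setT) F A.
  by apply: eq_bigl => A; rewrite subsetT.
rewrite !sumT; apply: ahlswede_daykin => [A|A|//|A|A B _ _]; rewrite ?mulr_ge0 //.
set C := A :&: B.
have -> : mu A * f A * (mu B * g B) = (mu A * mu B) * (f A * g B) by ring.
have -> : mu (A :|: B) * (mu C * f C * g C) = (mu (A :|: B) * mu C) * (f C * g C)
  by ring.
apply: ler_pM; rewrite ?mulr_ge0 //.
by apply: ler_pM; [| | apply/f_dec/subsetIl | apply/g_dec/subsetIr].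
Qed.

Section Configurations.
Variables (R : numDomainType) (I V : finType).
Local Notation cfg := {ffun I -> {ffun V -> 'I_2}}.

Definition ord2_of_bool (b : bool) : 'I_2 := if b then ord_max else ord0.

Definition cfg_of_set (A : {set I * V}) : cfg :=
  [ffun j => [ffun v => ord2_of_bool ((j, v) \in A)]].

Lemma cfg_of_set_bij : bijective cfg_of_set.
Proof.
exists (fun w : cfg => [set jv | w jv.1 jv.2 != ord0]).
  move=> A; apply/setP => -[j v]; rewrite inE !ffunE /=.
  by case: ((j, v) \in A).
move=> w; apply/ffunP => j; apply/ffunP => v; rewrite !ffunE inE /=.
by case: (w j v) => -[|[|m]] lt_m2 //=; apply: ord_inj.
Qed.

Definition cfg_le (w w' : cfg) := forall j v, (w j v <= w' j v)%N.

Lemma cfg_of_set_le (A B : {set I * V}) :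
  A \subset B -> cfg_le (cfg_of_set A) (cfg_of_set B).
Proof.
move=> sAB j v; rewrite !ffunE /ord2_of_bool.
by case: ifP => // /(subsetP sAB) ->.
Qed.

Lemma harris_cfg (mu f g : cfg -> R) :
  (forall w, 0 <= mu w) -> (forall w, 0 <= f w) -> (forall w, 0 <= g w) ->
  (forall w w', cfg_le w w' -> f w' <= f w) ->
  (forall w w', cfg_le w w' -> g w' <= g w) ->
  log_supermodular (mu \o cfg_of_set) ->
  (\sum_w mu w * f w) * (\sum_w mu w * g w)
  <= (\sum_w mu w) * (\sum_w mu w * f w * g w).
Proof.
move=> mu_ge0 f_ge0 g_ge0 f_dec g_dec mu_lsm.
rewrite !(reindex cfg_of_set (onW_bij _ cfg_of_set_bij)) /=.
by apply: (harris_sets (mu := mu \o cfg_of_set))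
  => // [A|A B /cfg_of_set_le/f_dec|A B /cfg_of_set_le/g_dec] /=.
Qed.

End Configurations.

Arguments cfg_of_set {I V}.

Lemma det_mx22 (R : comNzRingType) (M : 'M[R]_2) :
  \det M = M ord0 ord0 * M ord_max ord_max - M ord0 ord_max * M ord_max ord0.
Proof.
rewrite (expand_det_row _ 0) !big_ord_recl big_ord0 /cofactor !det_mx11 !mxE /=.
rewrite addr0 expr0 expr1 mul1r mulN1r mulrN.
have -> : lift 0 (0 : 'I_1) = ord_max :> 'I_2 by apply: val_inj.
by have -> : lift ord_max (0 : 'I_1) = ord0 :> 'I_2 by apply: val_inj.
Qed.

Lemma ord2_of_bool_prod (R : comNzRingType) (f : 'I_2 -> R) (a b : bool) :
  f (ord2_of_bool a) * f (ord2_of_bool b)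
  = f (ord2_of_bool (a || b)) * f (ord2_of_bool (a && b)).
Proof. by case: a; case: b => //=; rewrite mulrC. Qed.

Lemma tp2_ord2_of_bool (R : numDomainType) (M : 'M[R]_2) (a1 a2 b1 b2 : bool) :
  0 <= \det M ->
  M (ord2_of_bool a1) (ord2_of_bool a2) * M (ord2_of_bool b1) (ord2_of_bool b2)
  <= M (ord2_of_bool (a1 || b1)) (ord2_of_bool (a2 || b2))
     * M (ord2_of_bool (a1 && b1)) (ord2_of_bool (a2 && b2)).
Proof.
rewrite det_mx22 subr_ge0 => det_ge0.
by case: a1; case: a2; case: b1; case: b2; rewrite /ord2_of_bool /=;
  first [ done | rewrite [X in _ <= X]mulrC; done
        | rewrite [X in X <= _]mulrC; first [done | rewrite [X in _ <= X]mulrC]].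
Qed.

Lemma addr_rev_ord2 (R : zmodType) (f : 'I_2 -> R) (b : 'I_2) :
  f b + f (rev_ord b) = \sum_(c < 2) f c.
Proof.
rewrite big_ord_recr big_ord1 /=.
case: b => -[|[|m]] lt_b2 //=.
  by congr (f _ + f _); apply: ord_inj.
by rewrite addrC; congr (f _ + f _); apply: ord_inj.
Qed.

Section Tree.
Variables (V : finType) (root : V) (parent : V -> V).
Hypothesis tree : is_rooted_tree root parent.

Lemma exists_iter_parent_root (v : V) : exists n, iter n parent v == root.
Proof. by have [_ /(_ v) [n /eqP]] := tree; exists n. Qed.

Definition depth (v : V) : nat := ex_minn (exists_iter_parent_root v).

Lemma depth_parent (v : V) : v != root -> (depth (parent v) < depth v)%N.
Proof.
rewrite /depth => v_neq_root.
case: (ex_minnP (exists_iter_parent_root v)) => -[|n] /eqP itv _.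
  by rewrite -itv eqxx in v_neq_root.
case: ex_minnP => m _ min_m; rewrite ltnS; apply: min_m.
by rewrite -iterSr itv.
Qed.

Lemma parent_neq (v : V) : v != root -> parent v != v.
Proof. by move/depth_parent; apply: contraTneq => ->; rewrite ltnn. Qed.

Definition flip (u : V) (s : {ffun V -> 'I_2}) : {ffun V -> 'I_2} :=
  [ffun v => if v == u then rev_ord (s v) else s v].

Lemma flipK (u : V) : involutive (flip u).
Proof.
by move=> s; apply/ffunP => v; rewrite !ffunE; case: eqP => // _; rewrite rev_ordK.
Qed.

Lemma flip_id (u v : V) s : v != u -> flip u s v = s v.
Proof. by rewrite ffunE => /negbTE ->. Qed.

Lemma flip_at (u : V) s : flip u s u = rev_ord (s u).
Proof. by rewrite ffunE eqxx. Qed.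

Section LocalKernels.
Variable R : numFieldType.

Lemma sum_mul_flip_half (u : V) (G H : {ffun V -> 'I_2} -> R) :
  (forall s, G (flip u s) = G s) -> (forall s, H s + H (flip u s) = 1) ->
  \sum_s G s * H s = (\sum_s G s) / 2.
Proof.
move=> G_flip H_flip.
have sum_flip : \sum_s G s * H s = \sum_s G s * H (flip u s).
  rewrite (reindex_inj (can_inj (flipK u))) /=.
  by apply: eq_bigr => s _; rewrite G_flip.
apply: (canRL (mulfK _)); first by rewrite pnatr_eq0.
rewrite mulr_natr mulr2n {2}sum_flip -big_split /=.
by apply: eq_bigr => s _; rewrite -mulrDr H_flip mulr1.
Qed.

(* Each weight [W v] only reads the states at [v] and at its parent, so the
   state at a deepest vertex of [A] occurs in a single factor and can be summed
   out first. *)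
Lemma sum_prod_local_weights (W : V -> {ffun V -> 'I_2} -> R) (A : {set V}) :
  (forall v u s, u != v -> u != parent v -> W v (flip u s) = W v s) ->
  (forall v s, W v s + W v (flip v s) = 1) ->
  \sum_s \prod_(v in A) W v s = (\sum_(s : {ffun V -> 'I_2}) 1) / 2 ^+ #|A|.
Proof.
move=> W_local W_norm.
move: {2}#|A| (erefl #|A|) => n; elim: n A => [|n IH] A cA.
  move/eqP: cA; rewrite cards_eq0 => /eqP ->.
  by rewrite cards0 expr0 divr1; apply: eq_bigr => s _; rewrite big_set0.
have /set0Pn [w0 w0A] : A != set0 by rewrite -card_gt0 cA.
pose w := [arg max_(w > w0 in A) depth w].
have [wA w_deepest] : w \in A /\ forall v, v \in A -> (depth v <= depth w)%N.
  by rewrite /w; case: arg_maxnP.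
have cAw : #|A :\ w| = n by move: cA; rewrite (cardsD1 w A) wA add1n => -[].
have w_not_parent v : v \in A :\ w -> w != parent v.
  rewrite !inE => /andP [v_neq_w vA].
  have [v_root|v_neq_root] := eqVneq v root.
    by have [pr _] := tree; rewrite v_root pr eq_sym -v_root.
  by apply: contraTneq (w_deepest v vA) => ->; rewrite -ltnNge depth_parent.
rewrite cA exprSr invfM mulrA -cAw -(IH _ cAw).
under eq_bigr do rewrite (big_setD1 w wA) /= mulrC.
apply: sum_mul_flip_half => s; last exact: W_norm.
apply: eq_bigr => v vAw; apply: W_local (w_not_parent v vAw).
by move: vAw; rewrite !inE eq_sym => /andP [].
Qed.

Lemma markov_chain_normalized (pi0 : 'I_2 -> R) (Q : V -> 'M[R]_2) :
  \sum_(c < 2) pi0 c = 1 ->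
  (forall v, v != root -> forall a, \sum_(b < 2) Q v a b = 1) ->
  \sum_(s : {ffun V -> 'I_2})
    pi0 (s root) * \prod_(v | v != root) Q v (s (parent v)) (s v) = 1.
Proof.
move=> pi0_norm Q_norm.
pose W v (s : {ffun V -> 'I_2}) :=
  if v == root then pi0 (s root) else Q v (s (parent v)) (s v).
transitivity (\sum_s \prod_(v in [set: V]) W v s).
  apply: eq_bigr => s _; rewrite [RHS](big_setD1 root) ?inE //= /W eqxx.
  by congr (_ * _); apply: eq_big => [v|v /negbTE ->]; rewrite ?inE ?andbT.
rewrite sum_prod_local_weights => [|v u s u_neq_v u_neq_pv|v s]; rewrite /W.
- rewrite sumr_const card_ffun !card_ord cardsT natrX.
  by rewrite -[_ *+ _]mulr_natl mulr1 divff // expf_neq0 // pnatr_eq0.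
- case: eqP => [v_root|_]; first by rewrite flip_id // -v_root eq_sym.
  by rewrite !flip_id // eq_sym.
- case: eqP => [->|/eqP v_neq_root]; first by rewrite flip_at addr_rev_ord2.
  by rewrite flip_id ?parent_neq // flip_at addr_rev_ord2 Q_norm.
Qed.

End LocalKernels.
End Tree.

Arguments markov_chain_normalized {V root parent} tree {R pi0 Q}.

Lemma sum_subsets_prod (R : comNzRingType) (T : finType) (L : {set T}) (a b : T -> R) :
  \sum_(S : {set T} | S \subset L) \prod_(x in L) (if x \in S then a x else b x)
  = \prod_(x in L) (a x + b x).
Proof.
pose a' x := if x \in L then a x else 0; pose b' x := if x \in L then b x else 1.
have -> : \prod_(x in L) (a x + b x) = \prod_x (a' x + b' x).
  rewrite big_mkcond; apply: eq_bigr => x _.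
  by rewrite /a' /b'; case: (x \in L); rewrite ?add0r.
rewrite bigA_distr big_mkcond /=; apply: eq_big => // S _.
have [SL|/subsetPn [x xS xL]] := boolP (S \subset L).
  rewrite big_mkcond; apply: eq_bigr => x _; rewrite /a' /b'.
  by case: (boolP (x \in L)) => // xL; rewrite (contraNF (subsetP SL x) xL).
by rewrite (bigD1 x) //= xS /a' (negbTE xL) mul0r.
Qed.

Section IndependentExtinction.
Variables (R : numDomainType) (V : finType) (L : {set V}) (q : V -> R).

Lemma sum_surv_prob : \sum_(S : {set V} | S \subset L) surv_prob L q S = 1.
Proof. by rewrite sum_subsets_prod big1 // => x _; rewrite subrK. Qed.

Lemma prob_survivor_in (D : pred V) :
  \sum_(S : {set V} | S \subset L)
     surv_prob L q S * (if [exists x in S, D x] then 1 else 0)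
  = 1 - \prod_(x in L | D x) q x.
Proof.
pose a x := if D x then 0 else 1 - q x.
have none_survive : \sum_(S : {set V} | S \subset L)
    \prod_(x in L) (if x \in S then a x else q x) = \prod_(x in L | D x) q x.
  rewrite sum_subsets_prod big_mkcondr; apply: eq_bigr => x _.
  by rewrite /a; case: (D x); rewrite ?add0r ?subrK.
rewrite -[X in _ = X - _]sum_surv_prob -none_survive -sumrB; apply: eq_bigr => S SL.
case: existsP => [[x /andP [xS Dx]]|no_survivor].
  by rewrite (bigD1 x (subsetP SL x xS)) /= xS /a Dx mul0r subr0 mulr1.
rewrite mulr0 /surv_prob; apply/eqP; rewrite eq_sym subr_eq0; apply/eqP.
apply: eq_bigr => x _; rewrite /a; case: ifP => // xS.
by case: ifP => // Dx; case: no_survivor; exists x; rewrite xS.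
Qed.

Lemma expected_PD_indep (root : V) (parent : V -> V) (lambda : V -> R) :
  \sum_(S : {set V} | S \subset L) surv_prob L q S * PD root parent lambda S
  = \sum_(v | v != root) lambda v * (1 - \prod_(x in L | anc parent v x) q x).
Proof.
under eq_bigr do rewrite /PD mulr_sumr.
rewrite exchange_big; apply: eq_bigr => v _ /=.
rewrite -prob_survivor_in mulr_sumr; apply: eq_bigr => S _.
by case: ifP; rewrite ?mulr1 ?mulr0 // mulrC.
Qed.

End IndependentExtinction.

Section TraitProcess.
Variables (R : numFieldType) (V : finType) (root : V) (parent : V -> V) (k : nat).
Variables (pi : 'I_k -> 'I_2 -> R) (P : 'I_k -> V -> 'M[R]_2).
Local Notation cfg := {ffun 'I_k -> {ffun V -> 'I_2}}.
Local Notation mu := (config_prob root parent pi P).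

Hypothesis pi_ge0 : forall j s, 0 <= pi j s.
Hypothesis P_ge0 : forall j v, v != root -> forall a b, 0 <= P j v a b.
Hypothesis P_det_ge0 : forall j v, v != root -> 0 <= \det (P j v).

Lemma transition_prod_ge0 (w : cfg) j :
  0 <= \prod_(v | v != root) P j v (w j (parent v)) (w j v).
Proof. by apply: prodr_ge0 => v /P_ge0. Qed.

Lemma config_prob_ge0 (w : cfg) : 0 <= mu w.
Proof. by apply: prodr_ge0 => j _; rewrite mulr_ge0 ?pi_ge0 ?transition_prod_ge0. Qed.

Lemma config_prob_lsm : log_supermodular (mu \o cfg_of_set).
Proof.
move=> A B; rewrite /= /config_prob -!big_split /=.
apply: ler_prod => j _; rewrite !mulr_ge0 ?pi_ge0 ?transition_prod_ge0 //=.
rewrite mulrACA [X in _ <= X]mulrACA !ffunE !inE ord2_of_bool_prod.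
rewrite ler_wpM2l ?mulr_ge0 ?pi_ge0 // -!big_split /=.
apply: ler_prod => v v_neq_root; rewrite mulr_ge0 ?P_ge0 //= !ffunE !inE.
exact: tp2_ord2_of_bool (P_det_ge0 j v_neq_root).
Qed.

Hypothesis tree : is_rooted_tree root parent.
Hypothesis pi_norm : forall j, \sum_(s < 2) pi j s = 1.
Hypothesis P_norm : forall j v, v != root -> forall a, \sum_(b < 2) P j v a b = 1.

Lemma config_prob_sum1 : \sum_w mu w = 1.
Proof.
pose markov j (s : {ffun V -> 'I_2}) :=
  pi j (s root) * \prod_(v | v != root) P j v (s (parent v)) (s v).
rewrite [LHS](_ : _ = \prod_j \sum_s markov j s); last by rewrite bigA_distr_bigA.
apply: big1 => j _.
exact: (markov_chain_normalized tree (pi_norm j) (P_norm j)).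
Qed.

Lemma harris_prod (F : V -> cfg -> R) (D : pred V) (r : seq V) :
  (forall x, D x -> forall w, 0 <= F x w) ->
  (forall x, D x -> forall w w', cfg_le w w' -> F x w' <= F x w) ->
  \prod_(x <- r | D x) (\sum_w mu w * F x w)
  <= \sum_w mu w * \prod_(x <- r | D x) F x w.
Proof.
move=> F_ge0 F_dec; elim: r => [|x r IH].
  by rewrite big_nil; under eq_bigr do rewrite big_nil mulr1; rewrite config_prob_sum1.
rewrite big_cons; under [X in _ <= X]eq_bigr do rewrite big_cons.
case: ifP => Dx; last exact: IH.
have G_ge0 w : 0 <= \prod_(y <- r | D y) F y w by apply: prodr_ge0 => y /F_ge0.
have G_dec w w' :
    cfg_le w w' -> \prod_(y <- r | D y) F y w' <= \prod_(y <- r | D y) F y w.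
  by move=> le_ww'; apply: ler_prod => y Dy; rewrite F_ge0 //= F_dec.
apply: le_trans (ler_wpM2l _ IH) _.
  by rewrite sumr_ge0 // => w _; rewrite mulr_ge0 ?config_prob_ge0 ?F_ge0.
have := harris_cfg config_prob_ge0 (F_ge0 x Dx) G_ge0 (F_dec x Dx) G_dec
  config_prob_lsm.
by rewrite config_prob_sum1 mul1r; under [X in _ <= X -> _]eq_bigr do rewrite -mulrA.
Qed.

Lemma gFOB_probE (p : V -> {ffun 'I_k -> 'I_2} -> R) (x : V) :
  gFOB_prob root parent pi P p x = \sum_w mu w * p x (state_at w x).
Proof.
rewrite /gFOB_prob /leaf_state_prob.
under eq_bigr do rewrite big_mkcond mulr_sumr.
rewrite exchange_big; apply: eq_bigr => w _ /=.
rewrite (bigD1 (state_at w x)) //= eqxx big1 ?addr0 1?mulrC // => i.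
by rewrite eq_sym => /negbTE ->; rewrite mulr0.
Qed.

Lemma expPD_gFOBE (lambda : V -> R) (p : V -> {ffun 'I_k -> 'I_2} -> R) :
  expPD_gFOB root parent lambda pi P p
  = \sum_(v | v != root) lambda v *
      (1 - \prod_(x in leaves root parent | anc parent v x)
             \sum_w mu w * p x (state_at w x)).
Proof.
rewrite /expPD_gFOB expected_PD_indep.
by under eq_bigr do under eq_bigr do rewrite gFOB_probE.
Qed.

Lemma expPD_tFOBE (lambda : V -> R) (p : V -> {ffun 'I_k -> 'I_2} -> R) :
  expPD_tFOB root parent lambda pi P p
  = \sum_(v | v != root) lambda v * (1 - \sum_w mu w *
       \prod_(x in leaves root parent | anc parent v x) p x (state_at w x)).
Proof.
rewrite /expPD_tFOB; under eq_bigr do rewrite expected_PD_indep mulr_sumr.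
rewrite exchange_big; apply: eq_bigr => v _ /=.
rewrite -[X in _ * (X - _)]config_prob_sum1 -sumrB mulr_sumr.
by apply: eq_bigr => w _; rewrite mulrCA mulrBr mulr1.
Qed.

End TraitProcess.

Unset Implicit Arguments.

Theorem theorem3p1 (R : realFieldType) (V : finType) (root : V)
  (parent : V -> V) (lambda : V -> R) (k : nat)
  (pi : 'I_k -> 'I_2 -> R) (P : 'I_k -> V -> 'M[R]_2)
  (p : V -> {ffun 'I_k -> 'I_2} -> R) :
  is_rooted_tree root parent ->
  (forall v : V, v != root -> 0 <= lambda v) ->
  (forall j s, 0 < pi j s) ->
  (forall j, \sum_(s < 2) pi j s = 1) ->
  (forall j (v : V), v != root ->
     (forall a b, 0 <= P j v a b) /\ (forall a, \sum_(b < 2) P j v a b = 1)) ->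
  (forall j (v : V), v != root -> 0 <= \det (P j v)) ->
  (forall x, x \in leaves root parent -> forall i, 0 <= p x i <= 1) ->
  (forall x, x \in leaves root parent -> forall i l : {ffun 'I_k -> 'I_2},
     (forall j, (l j <= i j)%N) -> p x i <= p x l) ->
  expPD_tFOB root parent lambda pi P p <= expPD_gFOB root parent lambda pi P p.
Proof.
move=> tree lambda_ge0 pi_gt0 pi_norm P_stoch P_det_ge0 p_01 p_mono.
have pi_ge0 j s : 0 <= pi j s by exact/ltW.
have P_ge0 j v (v_neq_root : v != root) := (P_stoch j v v_neq_root).1.
have P_norm j v (v_neq_root : v != root) := (P_stoch j v v_neq_root).2.
rewrite (expPD_tFOBE tree pi_norm P_norm) expPD_gFOBE.
apply: ler_sum => v v_neq_root; rewrite ler_wpM2l ?lambda_ge0 // lerD2l lerN2.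
apply: (harris_prod pi_ge0 P_ge0 P_det_ge0 tree pi_norm P_norm).
  by move=> x /andP [xL _] w; case/andP: (p_01 x xL (state_at w x)).
move=> x /andP [xL _] w w' le_ww'; apply: p_mono => // j.
by rewrite !ffunE; exact: le_ww'.
Qed.
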